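(* Let $Y\subseteq\Omega$, $D\in\mathcal{I}^{\mathbf{c}}(Y)$ and $e\in\max(Y)$. Then $$\pi(Y,D)-\pi(Y-\{e\},D-\{e\})=\begin{cases}\eta_{(e)}\Big(\prod_{i\in\langle\{e\}\rangle_Y-\{e\}}\tau_{(i)}\Big)x^{|\langle\{e\}\rangle_Y|}\,\pi(Y-\langle\{e\}\rangle_Y,D),& e\notin D;\\ 0,& e\in D-\min(D);\\ -\Big(\prod_{i\in\langle\{e\}\rangle_Y-\{e\}}\tau_{(i)}\Big)x^{|\langle\{e\}\rangle_Y|}\,\pi(Y-\langle\{e\}\rangle_Y,D-\{e\}),& e\in\min(D).\end{cases}$$
   Context: $\Omega$ is a finite set and $\mathbf{P}=(\Omega,\preccurlyeq_{\mathbf{P}})$ a poset. For $Y\subseteq\Omega$: $\max(Y)$, $\min(Y)$ are the maximal, minimal elements of $Y$ w.r.t. $\preccurlyeq_{\mathbf{P}}$; $\mathcal{I}(Y)$ is the set of down-closed subsets of $Y$ (induced order); $\mathcal{I}^{\mathbf{c}}(Y)$ is the set of up-closed subsets of $Y$; for $A\subseteq Y$, $\langle A\rangle_Y=\{y\in Y:\exists a\in A, y\preccurlyeq_{\mathbf{P}}a\}$. $K$ is a commutative ring, $\tau,\eta\in K^{\Omega}$. For $D,I\subseteq\Omega$, $\varphi(D,I)=(-1)^{|I\cap D|}\big(\prod_{i\in I-\max(I)}\tau_{(i)}\big)\big(\prod_{i\in\max(I)-D}\eta_{(i)}\big)$ if $I\cap D\subseteq\max(I)$, and $0$ otherwise;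 for $D\subseteq Y\subseteq\Omega$, $\pi(Y,D)=\sum_{I\in\mathcal{I}(Y)}\varphi(D,I)x^{|I|}\in K[x]$. *)

From HB Require Import structures.
From mathcomp Require Import all_boot all_order all_algebra.
Set Implicit Arguments. Unset Strict Implicit. Unset Printing Implicit Defensive.
Import GRing.Theory.
Local Open Scope ring_scope.

(* The finite set Omega is a finType T; the poset P is given by a relation
   le : rel T, assumed to be a partial order in the theorem statement. *)

Section Defs.
Variable T : finType.
Variable le : rel T.

Definition maxs (Y : {set T}) : {set T} :=
  [set y in Y | [forall z in Y, le y z ==> (z == y)]].
Definition mins (Y : {set T}) : {set T} :=
  [set y in Y | [forall z in Y, le z y ==> (z == y)]].

Definition downclosed (Y I : {set T}) : bool :=
  (I \subset Y) && [forall i in I, forall y in Y, le y i ==> (y \in I)].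
Definition upclosed (Y D : {set T}) : bool :=
  (D \subset Y) && [forall d in D, forall y in Y, le d y ==> (y \in D)].

Definition dclos (Y A : {set T}) : {set T} :=
  [set y in Y | [exists a in A, le y a]].

Variable K : comNzRingType.
Variables tau eta : T -> K.

Definition phiD (D I : {set T}) : K :=
  if I :&: D \subset maxs I then
    (-1) ^+ #|I :&: D| * (\prod_(i in I :\: maxs I) tau i)
      * (\prod_(i in maxs I :\: D) eta i)
  else 0.

Definition piY (Y D : {set T}) : {poly K} :=
  \sum_(I in powerset Y | downclosed Y I) phiD D I *: 'X^#|I|.

End Defs.

(* Split the down-sets I of Y according to whether they contain e. As e is
   maximal, those avoiding e are exactly the down-sets of Y - {e}, on which
   phi(D, -) and phi(D - {e}, -) agree, so they cancel in the difference.
   A down-set containing e contains E = <{e}>_Y, hence is E ∪ J for a unique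
   down-set J of Y - E; since max(E ∪ J) = {e} ∪ max(J), phi(D, E ∪ J) is
   phi(D, J) times a coefficient depending only on E ∩ D. That set is empty
   when e ∉ D, is {e} when e is minimal in D, and otherwise contains a point
   strictly below the maximal element e, which makes phi vanish. *)

From HB Require Import structures.
From mathcomp Require Import all_boot all_order all_algebra.
From mathcomp Require Import ring.
Import GRing.Theory.
Local Open Scope ring_scope.

Set Implicit Arguments. Unset Strict Implicit.

Section Order.
Variables (T : finType) (le : rel T).
Implicit Types (Y A I J X D : {set T}) (e x : T).

Lemma maxsP Y x :
  reflect (x \in Y /\ forall z, z \in Y -> le x z -> z = x) (x \in maxs le Y).
Proof.
rewrite inE; apply: (iffP andP) => -[xY maxx]; split => //.
  by move=> z zY lxz; apply/eqP; move/forall_inP/(_ z zY)/implyP: maxx; apply.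
by apply/forall_inP => z zY; apply/implyP => /(maxx z zY) ->.
Qed.

Lemma minsP Y x :
  reflect (x \in Y /\ forall z, z \in Y -> le z x -> z = x) (x \in mins le Y).
Proof.
rewrite inE; apply: (iffP andP) => -[xY minx]; split => //.
  by move=> z zY lzx; apply/eqP; move/forall_inP/(_ z zY)/implyP: minx; apply.
by apply/forall_inP => z zY; apply/implyP => /(minx z zY) ->.
Qed.

Lemma maxs_sub Y : maxs le Y \subset Y.
Proof. by apply/subsetP => x /maxsP[]. Qed.

Lemma downclosedP Y I :
  reflect (I \subset Y /\ forall i y, i \in I -> y \in Y -> le y i -> y \in I)
          (downclosed le Y I).
Proof.
apply: (iffP andP) => -[sIY dI]; split => //.
  move=> i y iI yY lyi.
  by move/forall_inP/(_ i iI)/forall_inP/(_ y yY)/implyP: dI; apply.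
by apply/forall_inP => i iI; apply/forall_inP => y yY; apply/implyP; apply: dI.
Qed.

Lemma upclosedP Y D :
  reflect (D \subset Y /\ forall d y, d \in D -> y \in Y -> le d y -> y \in D)
          (upclosed le Y D).
Proof.
apply: (iffP andP) => -[sDY uD]; split => //.
  move=> d y dD yY ldy.
  by move/forall_inP/(_ d dD)/forall_inP/(_ y yY)/implyP: uD; apply.
by apply/forall_inP => d dD; apply/forall_inP => y yY; apply/implyP; apply: uD.
Qed.

Lemma dclos_sub Y A : dclos le Y A \subset Y.
Proof. by apply/subsetP => y; rewrite inE => /andP[]. Qed.

Lemma dclos1E Y e y : (y \in dclos le Y [set e]) = (y \in Y) && le y e.
Proof.
rewrite inE; congr (_ && _); apply/exists_inP/idP => [[a /set1P -> //]|lye].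
by exists e; rewrite ?set11.
Qed.

Lemma dclos_minimal Y A I :
  downclosed le Y I -> A \subset I -> dclos le Y A \subset I.
Proof.
case/downclosedP => _ dI sAI; apply/subsetP => y.
by rewrite inE => /andP[yY /exists_inP[a aA lya]]; apply: dI (subsetP sAI a aA) yY lya.
Qed.

Lemma downclosedD Y I X : downclosed le Y I -> downclosed le (Y :\: X) (I :\: X).
Proof.
case/downclosedP => sIY dI; apply/downclosedP; split; first exact: setSD.
by move=> i y /setDP[iI _] /setDP[yY yX] lyi; rewrite in_setD yX (dI i y).
Qed.

Lemma downclosed_setD1 Y I e : e \in maxs le Y ->
  downclosed le (Y :\ e) I = downclosed le Y I && (e \notin I).
Proof.
case/maxsP => eY maxe; apply/idP/andP => [dI|[dI eI]]; last first.
  have /setDidPl <- : [disjoint I & [set e]] by rewrite disjoint_sym disjoints1.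
  exact: downclosedD.
case/downclosedP: dI => sI dI.
have eI : e \notin I by apply/negP => /(subsetP sI); rewrite setD11.
split => //; apply/downclosedP; split; first exact: subset_trans sI (subsetDl _ _).
move=> i y iI yY lyi; have iY : i \in Y by case/setD1P: (subsetP sI i iI).
have [ye|nye] := eqVneq y e; last by apply: (dI i y iI); rewrite // in_setD1 nye.
by rewrite ye in lyi; rewrite -(maxe i iY lyi) iI in eI.
Qed.

Hypothesis le_trans : transitive le.

Lemma downclosed_dclosU Y A J :
  downclosed le (Y :\: dclos le Y A) J -> downclosed le Y (dclos le Y A :|: J).
Proof.
case/downclosedP => sJ dJ; apply/downclosedP; split.
  by rewrite subUset dclos_sub (subset_trans sJ (subsetDl _ _)).
move=> i y /setUP[iE|iJ] yY lyi.
  move: iE; rewrite !inE yY => /andP[_ /exists_inP[a aA lia]].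
  by apply/orP; left; apply/exists_inP; exists a; last exact: le_trans lia.
have [yE|yE] := boolP (y \in dclos le Y A); first by rewrite in_setU yE.
by rewrite in_setU (dJ i y) ?orbT // in_setD yE.
Qed.

End Order.

Section Expansion.
Variables (T : finType) (le : rel T) (K : comNzRingType) (tau eta : T -> K).
Implicit Types (Y I J D : {set T}) (e : T).

Local Notation phiD := (phiD le tau eta).
Local Notation piY := (piY le tau eta).

Lemma eq_phiD D D' I : I :&: D = I :&: D' -> phiD D I = phiD D' I.
Proof.
move=> eqID; rewrite /phiD eqID; case: ifP => // _; congr (_ * _).
apply: eq_bigl => x; rewrite !in_setD.
have [xm|] := boolP (x \in maxs le I); last by rewrite !andbF.
by move/setP/(_ x): eqID; rewrite !inE (subsetP (maxs_sub le I) x xm) /= => ->.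
Qed.

Lemma piYE Y D : piY Y D = \sum_(I | downclosed le Y I) phiD D I *: 'X^#|I|.
Proof.
apply: eq_bigl => I; rewrite powersetE andb_idl //.
by case/downclosedP.
Qed.

Lemma piY_sub_setD1 Y D e : e \in maxs le Y ->
  piY Y D - piY (Y :\ e) (D :\ e) =
  \sum_(I | downclosed le Y I && (e \in I)) phiD D I *: 'X^#|I|.
Proof.
move=> maxe; rewrite [piY Y D]piYE (bigID (fun I => e \in I)) /= -addrA.
rewrite [X in _ + X](_ : _ = 0) ?addr0 //; apply/eqP; rewrite subr_eq0; apply/eqP.
rewrite piYE; apply: eq_big => [I|I /andP[_ eI]]; first by rewrite downclosed_setD1.
congr (_ *: _); apply: eq_phiD; apply/setP => x; rewrite !inE.
by have [->|] := eqVneq x e; rewrite ?(negbTE eI).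
Qed.

End Expansion.

Section DownSet.
Variables (T : finType) (le : rel T).
Hypotheses (le_refl : reflexive le) (le_trans : transitive le).
Variables (Y : {set T}) (e : T).
Hypothesis maxe : e \in maxs le Y.
Let eY : e \in Y := subsetP (maxs_sub le Y) e maxe.
Implicit Types (I J D : {set T}).

Local Notation E := (dclos le Y [set e]).

Lemma mem_dclos1 : e \in E.
Proof. by rewrite dclos1E eY le_refl. Qed.

Lemma disjoint_dclos1 J : J \subset Y :\: E -> [disjoint E & J].
Proof. by rewrite subsetD disjoint_sym => /andP[]. Qed.

Lemma sum_downclosed_mem (V : nmodType) (F : {set T} -> V) :
  \sum_(I | downclosed le Y I && (e \in I)) F I =
  \sum_(J | downclosed le (Y :\: E) J) F (E :|: J).
Proof.
rewrite (reindex_onto (fun J => E :|: J) (fun I => I :\: E)) /=; last first.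
  move=> I /andP[dI eI]; have /setIidPr sEI : E \subset I.
    by apply: dclos_minimal dI _; rewrite sub1set.
  by rewrite -{2}(setID I E) sEI.
apply: eq_bigl => J; apply/idP/idP => [/andP[/andP[dEJ _] /eqP <-]|dJ].
  exact: downclosedD.
have /setDidPl EJ : [disjoint J & E].
  by rewrite disjoint_sym disjoint_dclos1 //; case/downclosedP: dJ.
by rewrite downclosed_dclosU // in_setU mem_dclos1 setDUl setDv set0U EJ eqxx.
Qed.

Variables (K : comNzRingType) (tau eta : T -> K).

Section Complement.
Variable J : {set T}.
Hypothesis sJ : J \subset Y :\: E.

Let EJ : [disjoint E & J] := disjoint_dclos1 sJ.
Let eJ : e \notin J := negbT (disjointFr EJ mem_dclos1).

Lemma maxs_dclos1U : maxs le (E :|: J) = e |: maxs le J.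
Proof.
case/maxsP: maxe => _ maxeY; have sEJY : E :|: J \subset Y.
  by rewrite subUset dclos_sub (subset_trans sJ (subsetDl _ _)).
apply/setP => x; apply/maxsP/setU1P => [[/setUP xEJ maxx]|].
  have [->|nxe] := eqVneq x e; [by left | right].
  have xJ : x \in J.
    case: xEJ => // xE; case/eqP: nxe; apply/esym/maxx; first by rewrite in_setU mem_dclos1.
    by move: xE; rewrite dclos1E => /andP[].
  by apply/maxsP; split => // z zJ; apply: maxx; rewrite in_setU zJ orbT.
case=> [->|/maxsP[xJ maxx]].
  by split=> [|z /(subsetP sEJY)]; [rewrite in_setU mem_dclos1 | apply: maxeY].
split=> [|z /setUP[zE lxz|]]; [by rewrite in_setU xJ orbT | | exact: maxx].
have xY : x \in Y by apply: (subsetP sEJY); rewrite in_setU xJ orbT.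
move: zE; rewrite dclos1E => /andP[_ lze].
have : x \in E by rewrite dclos1E xY (le_trans lxz lze).
by rewrite (disjointFl EJ xJ).
Qed.

Lemma card_dclos1U : #|E :|: J| = (#|E| + #|J|)%N.
Proof. by rewrite cardsU disjoint_setI0 // cards0 subn0. Qed.

Lemma prod_dclos1U_nonmax :
  \prod_(i in (E :|: J) :\: maxs le (E :|: J)) tau i =
  (\prod_(i in E :\ e) tau i) * \prod_(i in J :\: maxs le J) tau i.
Proof.
have EmJ : [disjoint E & maxs le J] := disjointWr (maxs_sub le J) EJ.
have Je : [disjoint J & [set e]] by rewrite disjoint_sym disjoints1.
rewrite maxs_dclos1U setDUl !setDUr (setDidPl EmJ) (setDidPl Je).
rewrite (setIidPl (subsetDl _ _)) (setIidPr (subsetDl _ _)) -bigU /=.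
  by apply: eq_bigl => i; rewrite in_setU.
exact: disjointWl (subsetDl _ _) (disjointWr (subsetDl _ _) EJ).
Qed.

Lemma phiD_dclos1U D :
  phiD le tau eta D (E :|: J) =
  if E :&: D \subset [set e] then
    (-1) ^+ #|E :&: D| * (\prod_(i in E :\ e) tau i) * (if e \in D then 1 else eta e)
      * phiD le tau eta D J
  else 0.
Proof.
have subE : (E :&: D \subset e |: maxs le J) = (E :&: D \subset [set e]).
  apply/subsetP/subsetP => sED x xED; have := sED x xED; rewrite in_setU1 in_set1.
    case/orP => // /(subsetP (maxs_sub le J)) xJ.
    by case/setIP: xED => xE _; rewrite (disjointFr EJ xE) in xJ.
  by move=> ->.
have subJ : (J :&: D \subset e |: maxs le J) = (J :&: D \subset maxs le J).
  apply/subsetP/subsetP => sJD x xJD; have := sJD x xJD; rewrite in_setU1.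
    case/orP => // /eqP xe; case/setIP: xJD => xJ _.
    by move: xJ; rewrite xe (negbTE eJ).
  by move=> ->; rewrite orbT.
rewrite /phiD prod_dclos1U_nonmax maxs_dclos1U setIUl subUset subE subJ.
case: (E :&: D \subset [set e]) => //=.
case: (J :&: D \subset maxs le J); last by rewrite mulr0.
have EDJD : [disjoint E :&: D & J :&: D].
  exact: disjointWl (subsetIl _ _) (disjointWr (subsetIl _ _) EJ).
rewrite cardsU (disjoint_setI0 EDJD) cards0 subn0 exprD setDUl.
have [eD|eD] := boolP (e \in D).
  have /eqP -> : [set e] :\: D == set0 by rewrite setD_eq0 sub1set.
  by rewrite set0U; ring.
have /setDidPl -> : [disjoint [set e] & D] by rewrite disjoints1.
rewrite big_setU1 /=; first by ring.
by rewrite in_setD (negbTE (contra (subsetP (maxs_sub le J) e) eJ)) andbF.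
Qed.

Lemma phiD_dclos1U_notin D : upclosed le Y D -> e \notin D ->
  phiD le tau eta D (E :|: J) = eta e * (\prod_(i in E :\ e) tau i) * phiD le tau eta D J.
Proof.
case/upclosedP => _ upD eD; rewrite phiD_dclos1U; have -> : E :&: D = set0.
  apply/setP => x; rewrite in_setI dclos1E in_set0.
  by apply/negP => /andP[/andP[_ lxe] xD]; rewrite (upD x e xD eY lxe) in eD.
by rewrite sub0set cards0 (negbTE eD) mul1r [_ * eta e]mulrC.
Qed.

Lemma phiD_dclos1U_notmin D : D \subset Y -> e \in D -> e \notin mins le D ->
  phiD le tau eta D (E :|: J) = 0.
Proof.
move=> sDY eD; apply: contraNeq; rewrite phiD_dclos1U.
case: ifP => [sED _|_]; last by rewrite eqxx.
apply/minsP; split => // d dD lde; apply/set1P/(subsetP sED).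
by rewrite in_setI dclos1E (subsetP sDY d dD) lde dD.
Qed.

Lemma phiD_dclos1U_min D : e \in mins le D ->
  phiD le tau eta D (E :|: J) = - (\prod_(i in E :\ e) tau i) * phiD le tau eta (D :\ e) J.
Proof.
case/minsP => eD mine; rewrite phiD_dclos1U; have -> : E :&: D = [set e].
  apply/setP => x; rewrite in_setI dclos1E in_set1; apply/idP/eqP => [|->].
    by case/andP=> /andP[_ lxe] xD; apply: mine.
  by rewrite eY le_refl eD.
rewrite subxx cards1 eD expr1 mulr1 mulN1r; congr (_ * _).
apply: eq_phiD; apply/setP => x; rewrite !inE.
by have [->|] := eqVneq x e; rewrite ?(negbTE eJ).
Qed.

End Complement.

Lemma sum_phiD_dclos1U D D' (c : K) :
  (forall J, J \subset Y :\: E -> phiD le tau eta D (E :|: J) = c * phiD le tau eta D' J) ->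
  \sum_(I | downclosed le Y I && (e \in I)) phiD le tau eta D I *: 'X^#|I| =
  c *: ('X^#|E| * piY le tau eta (Y :\: E) D').
Proof.
move=> phiDE; rewrite sum_downclosed_mem piYE mulr_sumr scaler_sumr.
apply: eq_bigr => J dJ; have sJ : J \subset Y :\: E by case/downclosedP: dJ.
by rewrite phiDE // card_dclos1U // exprD -scalerAr scalerA.
Qed.

End DownSet.

Theorem lemma3p1 (T : finType) (le : rel T)
  (le_refl : reflexive le) (le_anti : antisymmetric le) (le_trans : transitive le)
  (K : comNzRingType) (tau eta : T -> K) (Y D : {set T}) (e : T) :
  upclosed le Y D -> e \in maxs le Y ->
  let E := dclos le Y [set e] in
  piY le tau eta Y D - piY le tau eta (Y :\ e) (D :\ e) =
    if e \notin D then
      eta e * (\prod_(i in E :\ e) tau i) *: ('X^#|E| * piY le tau eta (Y :\: E) D)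
    else if e \notin mins le D then 0
    else - ((\prod_(i in E :\ e) tau i) *: ('X^#|E| * piY le tau eta (Y :\: E) (D :\ e))).
Proof.
move=> upD maxe E; rewrite piY_sub_setD1 //.
case: ifPn => [eD|/negPn eD].
  by apply: sum_phiD_dclos1U => // J sJ; apply: phiD_dclos1U_notin.
case: ifPn => [notmin|/negPn mine].
  have sDY : D \subset Y by case/upclosedP: upD.
  rewrite -[RHS](scale0r (R := K) ('X^#|E| * piY le tau eta (Y :\: E) D)).
  by apply: sum_phiD_dclos1U => // J sJ; rewrite phiD_dclos1U_notmin ?mul0r.
by rewrite -scaleNr; apply: sum_phiD_dclos1U => // J sJ; apply: phiD_dclos1U_min.
Qed.
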